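(* Let $P$ be a Poisson tensor on $\mathbb{R}^3$, let $H\in C^\infty(\mathbb{R}^3)$, let $S\in C^\infty(\mathbb{R}^3)$ satisfy $PdS=0$, and let $g$ be the symmetric tensor with components $g^{ij}=H^iH^j-\delta^{ij}\sum_k H^kH^k$. Then the system $\dot{x}=PdH+gdS$ and the Hamiltonian system $\dot{x}=PdH$ have the same regular equilibria, i.e. for every point $x$ with $P(x)\neq 0$, $x$ is an equilibrium of one system if and only if it is an equilibrium of the other.
   Context: $\mathbb{R}^3$ carries the standard Euclidean metric, used to identify tangent and cotangent spaces with $\mathbb{R}^3$; $H^i=H_i=\partial H/\partial x^i$. A Poisson tensor is a skew-symmetric bivector field satisfying the Jacobi identity. A regular equilibrium is an equilibrium point $x$ with $P(x)\neq 0$. *)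

From HB Require Import structures.
From mathcomp Require Import all_boot all_order all_algebra.
From mathcomp Require Import all_classical all_reals all_analysis.
Set Implicit Arguments. Unset Strict Implicit. Unset Printing Implicit Defensive.
Import Order.TTheory GRing.Theory Num.Theory.
Import numFieldNormedType.Exports.
Local Open Scope ring_scope.

Section Defs.
Variable R : realType.
Notation V := 'rV[R]_3.

Definition evec (i : 'I_3) : V := delta_mx 0 i.

Definition partial (i : 'I_3) (f : V -> R) : V -> R :=
  fun x => 'D_(evec i) f x.

Definition smooth (f : V -> R) : Prop :=
  forall (l : seq 'I_3) (x : V), differentiable (foldr partial f l) x.

(* gradient dH = (H_1, H_2, H_3), identified with a vector via the Euclidean metric *)
Definition grad (f : V -> R) (x : V) : V := \row_j partial j f x.

(* contraction of a (2,0)-tensor with a covector: (M v)^i = sum_j M^{ij} v_j *)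
Definition tapply (M : 'M[R]_3) (v : V) : V := \row_i \sum_j M i j * v 0 j.

Definition poisson_tensor (P : V -> 'M[R]_3) : Prop :=
  [/\ forall i j, smooth (fun x => P x i j),
      forall x i j, P x i j = - P x j i &
      forall x i j k,
        \sum_l (P x i l * partial l (fun y => P y j k) x
              + P x j l * partial l (fun y => P y k i) x
              + P x k l * partial l (fun y => P y i j) x) = 0].

Definition gtensor (H : V -> R) (x : V) : 'M[R]_3 :=
  \matrix_(i, j) (grad H x 0 i * grad H x 0 j
                  - (i == j)%:R * \sum_k (grad H x 0 k * grad H x 0 k)).

Definition ham_field (P : V -> 'M[R]_3) (H : V -> R) (x : V) : V :=
  tapply (P x) (grad H x).
Definition metriplectic_field (P : V -> 'M[R]_3) (H S : V -> R) (x : V) : V :=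
  tapply (P x) (grad H x) + tapply (gtensor H x) (grad S x).

Definition equilibrium (F : V -> V) (x : V) : Prop := F x = 0.

End Defs.

From HB Require Import structures.
From mathcomp Require Import all_boot all_order all_algebra.
From mathcomp Require Import all_classical all_reals all_analysis.
From mathcomp Require Import ring.
Import Order.TTheory GRing.Theory Num.Theory.
Local Open Scope ring_scope.

(* Write M = P(x), h = dH(x), s = dS(x), so that g dS = (h.s) h - |h|^2 s.
   As M is skew-symmetric, M v = Ω × v for its axial vector Ω, and
   M (M v) = (Ω.v) Ω - |Ω|^2 v; hence, as M <> 0, the kernel of M is the line
   spanned by Ω.
   If M h = 0, then h and s both lie on this line, and (h.s) h - |h|^2 s
   vanishes on parallel vectors.  Conversely, if w := M h satisfies
   w + g dS = 0, pairing with w gives |w|^2 = |h|^2 (w.s) - (h.s) (w.h) = 0,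
   since skew-symmetry gives (M h).h = 0 and (M h).s = - (M s).h = 0.
   Only the skew-symmetry of P(x) is used: neither the Jacobi identity nor
   any smoothness plays a role. *)

Definition skew_mx {R : zmodType} {n} (M : 'M[R]_n) : Prop :=
  forall i j, M i j = - M j i.

Definition dotmul {R : pzRingType} {n} (u v : 'rV[R]_n) : R :=
  \sum_i u 0 i * v 0 i.

Lemma skew_mx_diag {R : numDomainType} {n} {M : 'M[R]_n} :
  skew_mx M -> forall i, M i i = 0.
Proof.
by move=> skM i; apply/eqP; move/eqP: (skM i i); rewrite -addr_eq0 -mulr2n mulrn_eq0.
Qed.

Section DotProduct.
Variables (R : comPzRingType) (n : nat).
Implicit Types (u v w : 'rV[R]_n) (a : R).

Lemma dotmul0r u : dotmul u 0 = 0.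
Proof. by rewrite /dotmul big1 // => i _; rewrite mxE mulr0. Qed.

Lemma dotmulC u v : dotmul u v = dotmul v u.
Proof. by apply: eq_bigr => i _; rewrite mulrC. Qed.

Lemma dotmulDr u v w : dotmul u (v + w) = dotmul u v + dotmul u w.
Proof. by rewrite /dotmul -big_split; apply: eq_bigr => i _; rewrite mxE mulrDr. Qed.

Lemma dotmulNr u v : dotmul u (- v) = - dotmul u v.
Proof. by rewrite /dotmul -sumrN; apply: eq_bigr => i _; rewrite mxE mulrN. Qed.

Lemma dotmulBr u v w : dotmul u (v - w) = dotmul u v - dotmul u w.
Proof. by rewrite dotmulDr dotmulNr. Qed.

Lemma dotmulZr u a v : dotmul u (a *: v) = a * dotmul u v.
Proof. by rewrite /dotmul mulr_sumr; apply: eq_bigr => i _; rewrite mxE mulrCA. Qed.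

Lemma dotmul0l v : dotmul 0 v = 0.
Proof. by rewrite dotmulC dotmul0r. Qed.

Lemma dotmulZl a u v : dotmul (a *: u) v = a * dotmul u v.
Proof. by rewrite dotmulC dotmulZr dotmulC. Qed.

End DotProduct.

Lemma dotmul_self_eq0 (R : realDomainType) n (u : 'rV[R]_n) :
  dotmul u u = 0 -> u = 0.
Proof.
move=> uu0; apply/rowP => i; rewrite mxE; apply/eqP; rewrite -sqrf_eq0 expr2; apply/eqP.
by apply: (psumr_eq0P _ uu0) => // j _; rewrite -expr2 sqr_ge0.
Qed.

Lemma parallel_metric_term_eq0 (R : comPzRingType) n (w h s : 'rV[R]_n) a b :
  h = a *: w -> s = b *: w -> dotmul h s *: h - dotmul h h *: s = 0.
Proof.
move=> -> ->; rewrite !dotmulZl !dotmulZr !scalerA.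
by apply/eqP; rewrite subr_eq0; apply/eqP; congr (_ *: _); ring.
Qed.

Lemma sum_ord3 (V : nmodType) (F : 'I_3 -> V) : \sum_(i < 3) F i = F 0 + F 1 + F 2.
Proof.
rewrite !big_ord_recl big_ord0 addr0 addrA.
by congr (_ + _ + _); congr F; apply: val_inj.
Qed.

Lemma ord3P (i : 'I_3) : [\/ i = 0, i = 1 | i = 2].
Proof.
by case: i => [[|[|[|//]]] ?]; [apply: Or31 | apply: Or32 | apply: Or33]; apply: val_inj.
Qed.

Section Contraction.
Variable R : realType.
Implicit Types (M : 'M[R]_3) (u v h s : 'rV[R]_3).

Lemma tapply_gtensor (H : 'rV[R]_3 -> R) x s :
  tapply (gtensor H x) s =
  dotmul (grad H x) s *: grad H x - dotmul (grad H x) (grad H x) *: s.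
Proof.
apply/rowP => i; rewrite !mxE.
under eq_bigr do rewrite mxE mulrBl.
rewrite sumrB; congr (_ - _).
  by rewrite mulrC /dotmul mulr_sumr; apply: eq_bigr => j _; rewrite mulrA [grad H x 0 i]mxE.
under eq_bigr do rewrite -mulrA mulr_natl mulrb eq_sym.
by rewrite -big_mkcond big_pred1_eq.
Qed.

Lemma dotmul_tapply_skew M u v :
  skew_mx M -> dotmul (tapply M u) v = - dotmul (tapply M v) u.
Proof.
move=> skM; rewrite /dotmul -sumrN.
under eq_bigr do rewrite mxE mulr_suml.
under [RHS]eq_bigr do rewrite mxE mulr_suml -sumrN.
rewrite exchange_big; apply: eq_bigr => i _; apply: eq_bigr => j _.
by rewrite (skM j i); ring.
Qed.

Lemma dotmul_tapply_skew_self M u : skew_mx M -> dotmul (tapply M u) u = 0.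
Proof.
move=> skM; apply/eqP; move/eqP: (dotmul_tapply_skew M u u skM).
by rewrite -addr_eq0 -mulr2n mulrn_eq0.
Qed.

Lemma tapplyr0 M : tapply M 0 = 0.
Proof. by apply/rowP => i; rewrite !mxE big1 // => j _; rewrite mxE mulr0. Qed.

Definition axial M : 'rV[R]_3 := \row_k [:: M 2 1; M 0 2; M 1 0]`_k.

Lemma skew3_tapply_tapply M v : skew_mx M ->
  tapply M (tapply M v) =
  dotmul (axial M) v *: axial M - dotmul (axial M) (axial M) *: v.
Proof.
move=> skM; apply/rowP => k; rewrite !mxE /dotmul !sum_ord3 !mxE !sum_ord3.
by case: (ord3P k) => ->; rewrite /= !(skew_mx_diag skM) (skM 1 0) (skM 2 0) (skM 2 1); ring.
Qed.

Lemma axial_eq0 M : skew_mx M -> axial M = 0 -> M = 0.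
Proof.
move=> skM /rowP w0; apply/matrixP => i j; rewrite mxE.
move: (w0 0) (w0 1) (w0 2); rewrite !mxE /= => e0 e1 e2.
case: (ord3P i) => ->; case: (ord3P j) => ->; rewrite ?(skew_mx_diag skM) //;
  by rewrite ?e0 ?e1 ?e2 // skM ?e0 ?e1 ?e2 oppr0.
Qed.

Lemma skew3_kernel M v : skew_mx M -> M != 0 -> tapply M v = 0 ->
  v = (dotmul (axial M) v / dotmul (axial M) (axial M)) *: axial M.
Proof.
move=> skM M0 Mv0; have := skew3_tapply_tapply M v skM.
rewrite Mv0 tapplyr0 => /esym/eqP; rewrite subr_eq0 => /eqP wv.
have nz_w : dotmul (axial M) (axial M) != 0.
  by apply: contra_neq M0 => /dotmul_self_eq0; exact: axial_eq0.
by rewrite mulrC -scalerA wv scalerA mulVf ?scale1r.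
Qed.

Lemma skew3_metriplectic_equilibrium M h s :
  skew_mx M -> M != 0 -> tapply M s = 0 ->
  tapply M h + (dotmul h s *: h - dotmul h h *: s) = 0 <-> tapply M h = 0.
Proof.
move=> skM M0 Ms0; split=> [F0 | Mh0].
  apply: dotmul_self_eq0; move: (congr1 (dotmul (tapply M h)) F0).
  rewrite dotmulDr dotmulBr !dotmulZr dotmul_tapply_skew_self //.
  by rewrite (dotmul_tapply_skew M h s) // Ms0 dotmul0l dotmul0r oppr0 !mulr0 subr0 addr0.
rewrite Mh0 add0r; apply: parallel_metric_term_eq0; exact: skew3_kernel.
Qed.

End Contraction.

Theorem mainTheorem4 (R : realType) (P : 'rV[R]_3 -> 'M[R]_3)
  (H S : 'rV[R]_3 -> R) :
  poisson_tensor P -> smooth H -> smooth S ->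
  (forall x, tapply (P x) (grad S x) = 0) ->
  forall x : 'rV[R]_3, P x != 0 ->
    (equilibrium (metriplectic_field P H S) x <->
     equilibrium (ham_field P H) x).
Proof.
move=> [_ skP _] _ _ PdS x Px0.
rewrite /equilibrium /metriplectic_field /ham_field tapply_gtensor.
exact: skew3_metriplectic_equilibrium (skP x) Px0 (PdS x).
Qed.
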